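(* Let $n,k,l\ge1$ and let $\mathbf P:\mathbb R^{n\times k}\to\mathbb R^{n\times l}$ be a permutation equivariant polynomial map. Then $$\mathbf P(\mathbf X)=\sum_{\alpha\in\mathbb N^k,\ |\alpha|\le n}\mathbf b_\alpha\,\mathbf q_\alpha^T,$$ where $\mathbf b_\alpha=(\mathbf x_1^\alpha,\dots,\mathbf x_n^\alpha)^T\in\mathbb R^n$ and $\mathbf q_\alpha=(q_{\alpha,1},\dots,q_{\alpha,l})^T$ with each $q_{\alpha,j}=q_{\alpha,j}(s_1(\mathbf X),\dots,s_t(\mathbf X))$ a polynomial in the $t=\binom{n+k}{k}$ power-sum multi-symmetric polynomials $s_1,\dots,s_t$. Conversely, every polynomial map $\mathbf P$ of this form is permutation equivariant.
   Context: $\mathbf X=(\mathbf x_1,\dots,\mathbf x_n)^T\in\mathbb R^{n\times k}$ with rows $\mathbf x_i\in\mathbb R^k$; $S_n$ acts by $\sigma\cdot\mathbf X=(\mathbf x_{\sigma^{-1}(1)},\dots,\mathbf x_{\sigma^{-1}(n)})^T$, and $\mathbf P$ is permutation equivariant if $\mathbf P(\sigma\cdot\mathbf X)=\sigma\cdot\mathbf P(\mathbf X)$ for all $\sigma\in S_n$. For $\mathbf x\in\mathbb R^k$ and a multi-index $\alpha=(\alpha_1,\dots,\alpha_k)\in\mathbb N^k$, $\mathbf x^\alpha=x_1^{\alpha_1}\cdots x_k^{\alpha_k}$ and $|\alpha|=\sum_i\alpha_i$. Let $\alpha_1,\dots,\alpha_t$ enumerate all multi-indices $\alpha\in\mathbb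 N^k$ with $|\alpha|\le n$ (there are $t=\binom{n+k}{k}$ of them); the power-sum multi-symmetric polynomials are $s_j(\mathbf X)=\sum_{i=1}^n\mathbf x_i^{\alpha_j}$, $j\in[t]$. *)

From HB Require Import structures.
From mathcomp Require Import all_boot all_order all_algebra all_fingroup.
From mathcomp Require Import reals.
From mathcomp.multinomials Require Import mpoly.

Set Implicit Arguments.
Unset Strict Implicit.
Unset Printing Implicit Defensive.

Import Order.TTheory GRing.Theory Num.Theory.
Local Open Scope ring_scope.

Section Defs.
Variables (R : realType) (n k l : nat).

Definition perm_rows (m : nat) (s : 'S_n) (X : 'M[R]_(n, m)) : 'M[R]_(n, m) :=
  \matrix_(i, j) X ((s^-1)%g i) j.

Definition perm_equivariant (P : 'M[R]_(n, k) -> 'M[R]_(n, l)) : Prop :=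
  forall (s : 'S_n) (X : 'M[R]_(n, k)), P (perm_rows s X) = perm_rows s (P X).

Definition is_polymap (P : 'M[R]_(n, k) -> 'M[R]_(n, l)) : Prop :=
  exists p : 'I_n -> 'I_l -> {mpoly R[n * k]},
    forall (X : 'M[R]_(n, k)) (i : 'I_n) (j : 'I_l),
      P X i j = (p i j).@[fun m => mxvec X 0 m].

(* multi-indices alpha in N^k with |alpha| <= n *)
Definition midx := 'X_{1..k < n.+1}.

(* t = binom(n+k, k) = number of such multi-indices *)
Definition t := #|{: midx}|.

Definition mon (alpha : 'X_{1..k}) (x : 'rV[R]_k) : R :=
  \prod_(c < k) x 0 c ^+ alpha c.

Definition powersum (alpha : midx) (X : 'M[R]_(n, k)) : R :=
  \sum_(i < n) mon alpha (row i X).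

Definition powersums (X : 'M[R]_(n, k)) : 'I_t -> R :=
  fun j => powersum (enum_val j) X.

Definition bvec (alpha : midx) (X : 'M[R]_(n, k)) : 'cV[R]_n :=
  \col_i mon alpha (row i X).

Definition qvec (q : midx -> 'I_l -> {mpoly R[t]}) (alpha : midx)
    (X : 'M[R]_(n, k)) : 'cV[R]_l :=
  \col_j (q alpha j).@[powersums X].

Definition has_powersum_form (P : 'M[R]_(n, k) -> 'M[R]_(n, l)) : Prop :=
  exists q : midx -> 'I_l -> {mpoly R[t]},
    forall X : 'M[R]_(n, k),
      P X = \sum_(alpha : midx) bvec alpha X *m (qvec q alpha X)^T.

End Defs.

From HB Require Import structures.
From mathcomp Require Import all_boot all_order all_algebra all_fingroup.
From mathcomp Require Import reals.
From mathcomp.multinomials Require Import mpoly.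
From mathcomp Require Import ring zify.

Set Implicit Arguments.
Unset Strict Implicit.
Unset Printing Implicit Defensive.
Import Order.TTheory GRing.Theory Num.Theory.
Local Open Scope ring_scope.

(* By equivariance, P X i j = P ((0 i) X) 0 j, so it suffices to treat an
   entry of the first row: a polynomial f invariant under the permutations
   fixing row 0.  Averaging over transpositions eliminates the rows n-1, ..., 1
   one at a time, keeping f in the algebra generated by the remaining rows and
   the power sums p_g of all degrees.  What is left is a polynomial in the first
   row x_0 and in power sums, brought to the required form by two reductions:
   a product of n entries of x_0 has lower x_0-degree modulo power-sum
   coefficients, and, summing that reduction over the rows, every p_g is a
   polynomial in the p_a with |a| <= n. *)

Section Monomials.
Variables (R : realType) (k : nat).
Implicit Types (a b : 'X_{1..k}) (x : 'rV[R]_k).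

Lemma mon0 x : mon 0%MM x = 1.
Proof. by rewrite /mon big1 // => c _; rewrite mnm0E expr0. Qed.

Lemma monD a b x : mon (a + b)%MM x = mon a x * mon b x.
Proof. by rewrite /mon -big_split; apply: eq_bigr => c _; rewrite mnmDE exprD. Qed.

Lemma mon_mnm1 c x : mon U_(c)%MM x = x 0 c.
Proof.
rewrite /mon (bigD1 c) //= mnm1E eqxx expr1 big1 ?mulr1 // => c' c'c.
by rewrite mnm1E eq_sym (negbTE c'c) expr0.
Qed.

Lemma mon_prod_seq a : exists cs : seq 'I_k,
  size cs = mdeg a /\ forall x, mon a x = \prod_(c <- cs) x 0 c.
Proof.
exists (flatten [seq nseq (a c) c | c <- enum 'I_k]); split.
  rewrite size_flatten /shape -map_comp sumnE big_map big_enum /= mdegE.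
  by apply: eq_bigr => c _; rewrite size_nseq.
move=> x; rewrite big_flatten /= big_map big_enum /=.
by apply: eq_bigr => c _; rewrite big_nseq iter_mulr_1.
Qed.

End Monomials.

Section PermRows.
Variables (R : realType) (n k : nat).
Implicit Types (s : 'S_n) (X : 'M[R]_(n, k)).

Lemma row_perm_rows s X i : row i (perm_rows s X) = row ((s^-1)%g i) X.
Proof. by apply/rowP => j; rewrite !mxE. Qed.

Lemma powersum_perm_rows (a : midx n k) s X :
  powersum a (perm_rows s X) = powersum a X.
Proof.
rewrite /powersum (reindex_inj (@perm_inj _ s)) /=.
by apply: eq_bigr => i _; rewrite row_perm_rows permK.
Qed.

Lemma meval_powersums_perm_rows (q : {mpoly R[t n k]}) s X :
  q.@[powersums (perm_rows s X)] = q.@[powersums X].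
Proof. by apply: meval_eq => j; rewrite /powersums powersum_perm_rows. Qed.

Lemma tperm_id_below (r m a : 'I_n) : (r <= m)%N -> (a < r)%N -> tperm r m a = a.
Proof.
move=> le_rm lt_ar; apply: tpermD; apply/eqP => e.
  by rewrite e ltnn in lt_ar.
by rewrite -e ltnNge le_rm in lt_ar.
Qed.

End PermRows.

Section InjectiveSums.
Variables (R : comRingType) (T : finType).
Implicit Types (A : {set T}) (fs : seq (T -> R)).

(* The sum of [f_1 m_1 * ... * f_r m_r] over pairwise distinct [m_i] outside [A]. *)
Fixpoint injsum A fs : R :=
  if fs is f :: fs' then \sum_(m | m \notin A) f m * injsum (m |: A) fs' else 1.

(* Pigeonhole: a tuple of [#|~: A|] distinct points outside [A] hits [x]. *)
Lemma injsum_eq0 fs A x : (size fs + #|A| = #|T|)%N -> x \notin A ->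
  all (fun f => f x == 0) fs -> injsum A fs = 0.
Proof.
elim: fs A => [|f fs IH] A /= sizeA xA.
  have: (#|A| < #|T|)%N.
    rewrite -(cardsC A) -{1}[#|A|]addn0 ltn_add2l card_gt0.
    by apply/set0Pn; exists x; rewrite in_setC.
  by rewrite -sizeA ltnn.
move=> /andP[/eqP fx0 fs0]; apply: big1 => m mA; case: (m =P x) => [->|/eqP mx].
  by rewrite fx0 mul0r.
rewrite IH ?mulr0 //; first by rewrite cardsU1 mA -sizeA addnA addn1.
by rewrite in_setU1 negb_or eq_sym mx.
Qed.

Lemma injsum_lin pre post A (a : R) (f g : T -> R) :
  injsum A (pre ++ (fun m => a * f m - g m) :: post) =
  a * injsum A (pre ++ f :: post) - injsum A (pre ++ g :: post).
Proof.
elim: pre A => [|h pre IH] A /=; rewrite mulr_sumr -sumrB; apply: eq_bigr => m _.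
  by ring.
by rewrite IH; ring.
Qed.

Lemma injsum_nseq1 (f : T -> R) r A : f =1 (fun _ => 1) ->
  injsum A (nseq r f) = ((#|T| - #|A|) ^_ r)%:R.
Proof.
move=> f1; elim: r A => [|r IH] A /=; first by rewrite ffactn0.
under eq_bigr => m mA do rewrite IH f1 mul1r cardsU1 mA.
rewrite sumr_const -mulrnA; congr (_%:R).
have -> : #|[pred m | m \notin A]| = (#|T| - #|A|)%N.
  by rewrite -(cardsC A) addKn; apply: eq_card => m; rewrite !inE.
by rewrite ffactnS mulnC add1n subnS.
Qed.

Lemma exchange_big_notin A (F : T -> T -> R) :
  \sum_(m | m \notin A) \sum_(m' | m' \notin m |: A) F m m' =
  \sum_(m' | m' \notin A) \sum_(m | m \notin m' |: A) F m m'.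
Proof.
rewrite (exchange_big_dep (fun m' => m' \notin A)) /=; last first.
  by move=> m m' _; rewrite in_setU1 negb_or => /andP [].
apply: eq_bigr => m' m'A; apply: eq_bigl => m.
rewrite !in_setU1 !negb_or; case: (m =P m') => [->|/eqP mm'].
  by rewrite eqxx andbF.
by rewrite m'A eq_sym mm' /= andbT.
Qed.

End InjectiveSums.

Section PowerSumPolynomials.
Variables (R : realType) (n k : nat).
Local Notation M := 'M[R]_(n, k).
Implicit Types (f h : M -> R) (X : M).

Definition ps_poly f := exists q : {mpoly R[t n k]}, forall X, f X = q.@[powersums X].

Lemma ps_poly_meval (q : {mpoly R[t n k]}) : ps_poly (fun X => q.@[powersums X]).
Proof. by exists q. Qed.

Lemma ps_poly_eq f h : ps_poly f -> f =1 h -> ps_poly h.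
Proof. by move=> [q fq] fh; exists q => X; rewrite -fh. Qed.

Lemma ps_polyC c : ps_poly (fun _ => c).
Proof. by exists c%:MP => X; rewrite mevalC. Qed.

Lemma ps_polyD f h : ps_poly f -> ps_poly h -> ps_poly (fun X => f X + h X).
Proof. by move=> [p fp] [q hq]; exists (p + q) => X; rewrite mevalD fp hq. Qed.

Lemma ps_polyM f h : ps_poly f -> ps_poly h -> ps_poly (fun X => f X * h X).
Proof. by move=> [p fp] [q hq]; exists (p * q) => X; rewrite mevalM fp hq. Qed.

Lemma ps_poly_sum (I : Type) (r : seq I) (P : pred I) (F : I -> M -> R) :
  (forall i, P i -> ps_poly (F i)) -> ps_poly (fun X => \sum_(i <- r | P i) F i X).
Proof.
move=> PF; elim: r => [|i r IH].
  by apply: ps_poly_eq (ps_polyC 0) _ => X; rewrite big_nil.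
case Pi: (P i); last by apply: ps_poly_eq IH _ => X; rewrite big_cons Pi.
by apply: ps_poly_eq (ps_polyD (PF i Pi) IH) _ => X; rewrite big_cons Pi.
Qed.

Lemma ps_poly_powersum (a : midx n k) : ps_poly (powersum a).
Proof. by exists 'X_(enum_rank a) => X; rewrite mevalXU /powersums enum_rankK. Qed.

Implicit Types (A : {set 'I_n}) (b : 'X_{1..k}) (gs : seq 'X_{1..k}).

Definition rowmon X (g : 'X_{1..k}) (m : 'I_n) : R := mon g (row m X).

Definition injmon X A (gs : seq 'X_{1..k}) := injsum A (map (rowmon X) gs).

Fixpoint bumps (b : 'X_{1..k}) (gs : seq 'X_{1..k}) : seq (seq 'X_{1..k}) :=
  if gs is g :: gs' then ((g + b)%MM :: gs') :: map (cons g) (bumps b gs')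
  else [::].

Definition degsum (gs : seq 'X_{1..k}) := (\sum_(g <- gs) mdeg g)%N.

Lemma degsum_cons g gs : degsum (g :: gs) = (mdeg g + degsum gs)%N.
Proof. by rewrite /degsum big_cons. Qed.

Lemma degsum_cat gs hs : degsum (gs ++ hs) = (degsum gs + degsum hs)%N.
Proof. by rewrite /degsum big_cat. Qed.

Lemma mem_bumps b gs bs : bs \in bumps b gs ->
  size bs = size gs /\ degsum bs = (degsum gs + mdeg b)%N.
Proof.
elim: gs bs => [|g gs IH] bs //=; rewrite in_cons => /orP[/eqP ->|].
  by rewrite !degsum_cons mdegD addnAC.
by case/mapP => bs' /IH[sz_bs' deg_bs'] ->; rewrite /= sz_bs' !degsum_cons deg_bs' addnA.
Qed.

(* Summing [m] over all of [~: A] overcounts exactly the tuples in which [m]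
   coincides with one of the points carrying [gs]; merging the two monomials
   there is what [bumps] records. *)
Lemma injmon_cons X b gs A :
  \sum_(m | m \notin A) rowmon X b m * injmon X (m |: A) gs =
  (\sum_(m | m \notin A) rowmon X b m) * injmon X A gs
  - \sum_(bs <- bumps b gs) injmon X A bs.
Proof.
elim: gs A => [|g gs IH] A.
  by rewrite /injmon /= big_nil subr0 mulr1; apply: eq_bigr => m _; rewrite mulr1.
have inner m' : m' \notin A ->
  \sum_(m | m \notin m' |: A) rowmon X b m * (rowmon X g m' * injmon X (m |: (m' |: A)) gs)
  = rowmon X g m' * ((\sum_(m | m \notin A) rowmon X b m - rowmon X b m')
      * injmon X (m' |: A) gs - \sum_(bs <- bumps b gs) injmon X (m' |: A) bs).
  move=> m'A; rewrite (eq_bigr (fun m => rowmon X g m' *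
    (rowmon X b m * injmon X (m |: (m' |: A)) gs))) => [|m _]; last by ring.
  rewrite -mulr_sumr IH; congr (_ * (_ * _ - _)).
  rewrite [in RHS](bigD1 m') //= addrAC subrr add0r.
  by apply: eq_bigl => m; rewrite in_setU1 negb_or andbC.
transitivity (\sum_(m' | m' \notin A) rowmon X g m' *
   ((\sum_(m | m \notin A) rowmon X b m - rowmon X b m') * injmon X (m' |: A) gs
      - \sum_(bs <- bumps b gs) injmon X (m' |: A) bs)).
  rewrite /injmon /=; under eq_bigr => m _ do rewrite mulr_sumr.
  rewrite exchange_big_notin; apply: eq_bigr => m' m'A; rewrite -inner //.
  by apply: eq_bigr => m _; rewrite setUCA.
rewrite /= big_cons big_map /injmon /= [X in _ - (_ + X)]exchange_big /=.
rewrite -big_split /= mulr_sumr -sumrB; apply: eq_bigr => m' _.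
have -> : rowmon X (g + b) m' = rowmon X g m' * rowmon X b m' by exact: monD.
by rewrite -mulr_sumr; ring.
Qed.

Lemma injmon_ps_poly gs : (degsum gs <= n)%N -> ps_poly (fun X => injmon X set0 gs).
Proof.
elim: {gs}(size gs) {-2}gs (leqnn (size gs)) => [|s IH] [|b gs] //= sz_gs deg_gs;
  try exact: ps_polyC.
have deg_b : (mdeg b < n.+1)%N.
  by rewrite ltnS (leq_trans _ deg_gs) // degsum_cons leq_addr.
have deg_gs' : (degsum gs <= n)%N.
  by rewrite (leq_trans _ deg_gs) // degsum_cons leq_addl.
have recE X : powersum (BMultinom deg_b) X * injmon X set0 gs
   + (-1) * \sum_(bs <- bumps b gs | bs \in bumps b gs) injmon X set0 bs
   = injmon X set0 (b :: gs).
  rewrite -big_seq mulN1r [RHS]/injmon /= -/(injmon _ _ _) injmon_cons.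
  by congr (_ * _ - _); apply: eq_bigl => m; rewrite in_set0.
apply: ps_poly_eq recE; apply: ps_polyD.
  exact: ps_polyM (ps_poly_powersum _) (IH _ sz_gs deg_gs').
apply: ps_polyM (ps_polyC _) _; apply: ps_poly_sum => bs /mem_bumps[sz_bs deg_bs].
by apply: IH; rewrite ?sz_bs // deg_bs addnC -degsum_cons.
Qed.

End PowerSumPolynomials.

Arguments ps_polyC {R n k}.
Arguments ps_poly_powersum {R n k}.

Section RowElimination.
Variables (R : realType) (n k : nat).
Local Notation M := 'M[R]_(n, k).
Implicit Types (f h : M -> R) (X : M).

Definition invariant_from (r : nat) f := forall (s : 'S_n) X,
  (forall a : 'I_n, (a < r)%N -> s a = a) -> f (perm_rows s X) = f X.

Lemma invariant_from_widen r r' f :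
  (r <= r')%N -> invariant_from r f -> invariant_from r' f.
Proof.
move=> le_rr' finv s X sfix; apply: finv => a lt_ar.
by apply: sfix; apply: leq_trans le_rr'.
Qed.

(* The [_ext] constructors of this and the later inductive classes stand in
   for functional extensionality. *)
Inductive rowgen (r : nat) : (M -> R) -> Prop :=
| rowgenC c : rowgen r (fun _ => c)
| rowgenX (a : 'I_n) (c : 'I_k) : (a < r)%N -> rowgen r (fun X => X a c)
| rowgenP (g : 'X_{1..k}) : rowgen r (fun X => \sum_(i < n) mon g (row i X))
| rowgenD f h : rowgen r f -> rowgen r h -> rowgen r (fun X => f X + h X)
| rowgenM f h : rowgen r f -> rowgen r h -> rowgen r (fun X => f X * h X)
| rowgen_ext f h : rowgen r f -> f =1 h -> rowgen r h.

Lemma rowgen_invariant r f : rowgen r f -> invariant_from r f.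
Proof.
move=> + s X sfix; elim=> [c|a c lt_ar|g|{}f h _ IHf _ IHh|{}f h _ IHf _ IHh|{}f h _ IH fh].
- by [].
- by rewrite mxE -{1}(sfix a lt_ar) permK.
- rewrite (reindex_inj (@perm_inj _ s)) /=.
  by apply: eq_bigr => i _; rewrite row_perm_rows permK.
- by rewrite IHf IHh.
- by rewrite IHf IHh.
- by rewrite -!fh.
Qed.

Lemma rowgen_sum r (I : Type) (l : seq I) (P : pred I) (F : I -> M -> R) :
  (forall i, P i -> rowgen r (F i)) -> rowgen r (fun X => \sum_(i <- l | P i) F i X).
Proof.
move=> PF; elim: l => [|i l IH].
  by apply: rowgen_ext (rowgenC r 0) _ => X; rewrite big_nil.
case Pi: (P i); last by apply: rowgen_ext IH _ => X; rewrite big_cons Pi.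
by apply: rowgen_ext (rowgenD (PF i Pi) IH) _ => X; rewrite big_cons Pi.
Qed.

Lemma rowgen_prod r (I : Type) (l : seq I) (P : pred I) (F : I -> M -> R) :
  (forall i, P i -> rowgen r (F i)) -> rowgen r (fun X => \prod_(i <- l | P i) F i X).
Proof.
move=> PF; elim: l => [|i l IH].
  by apply: rowgen_ext (rowgenC r 1) _ => X; rewrite big_nil.
case Pi: (P i); last by apply: rowgen_ext IH _ => X; rewrite big_cons Pi.
by apply: rowgen_ext (rowgenM (PF i Pi) IH) _ => X; rewrite big_cons Pi.
Qed.

Lemma rowgen_exp r f e : rowgen r f -> rowgen r (fun X => f X ^+ e).
Proof.
move=> rf; elim: e => [|e IH]; first by apply: rowgen_ext (rowgenC r 1) _ => X.
by apply: rowgen_ext (rowgenM rf IH) _ => X; rewrite exprS.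
Qed.

Lemma rowgen_mon r (a : 'I_n) (b : 'X_{1..k}) :
  (a < r)%N -> rowgen r (fun X => mon b (row a X)).
Proof.
move=> lt_ar; apply: rowgen_prod => c _; apply: rowgen_exp.
by apply: rowgen_ext (rowgenX c lt_ar) _ => X; rewrite mxE.
Qed.

Lemma rowgen_polymap (q : {mpoly R[n * k]}) :
  rowgen n (fun X => q.@[fun m => mxvec X 0 m]).
Proof.
apply: rowgen_ext (fun X => esym (mevalE (fun m => mxvec X 0 m) q)).
apply: rowgen_sum => m _; apply: rowgenM; first exact: rowgenC.
apply: rowgen_prod => i _; apply: rowgen_exp; case: (mxvec_indexP i) => a c.
by apply: rowgen_ext (rowgenX c (ltn_ord a)) _ => X; rewrite mxvecE.
Qed.

Inductive rowspan (r : 'I_n) : (M -> R) -> Prop :=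
| rowspan0 : rowspan r (fun _ => 0)
| rowspanT (b : 'X_{1..k}) h : rowgen r h -> rowspan r (fun X => mon b (row r X) * h X)
| rowspanD f h : rowspan r f -> rowspan r h -> rowspan r (fun X => f X + h X)
| rowspan_ext f h : rowspan r f -> f =1 h -> rowspan r h.

Lemma rowspanM (r : 'I_n) f h :
  rowspan r f -> rowspan r h -> rowspan r (fun X => f X * h X).
Proof.
move=> rf rh; elim: rf => [|b c rc|f1 f2 _ IH1 _ IH2|f1 f2 _ IH e].
- by apply: rowspan_ext (rowspan0 r) _ => X; rewrite mul0r.
- elim: rh => [|b' c' rc'|h1 h2 _ IH1 _ IH2|h1 h2 _ IH e].
  + by apply: rowspan_ext (rowspan0 r) _ => X; rewrite mulr0.
  + apply: rowspan_ext (rowspanT (b + b')%MM (rowgenM rc rc')) _ => X.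
    by rewrite monD; ring.
  + by apply: rowspan_ext (rowspanD IH1 IH2) _ => X; rewrite mulrDr.
  + by apply: rowspan_ext IH _ => X; rewrite e.
- by apply: rowspan_ext (rowspanD IH1 IH2) _ => X; rewrite mulrDl.
- by apply: rowspan_ext IH _ => X; rewrite e.
Qed.

Lemma rowgenS_rowspan (r : 'I_n) f : rowgen r.+1 f -> rowspan r f.
Proof.
have rowspan_rowgen h : rowgen r h -> rowspan r h.
  by move=> rh; apply: rowspan_ext (rowspanT 0%MM rh) _ => X; rewrite mon0 mul1r.
elim=> [c|a c|g|f1 f2 _ IH1 _ IH2|f1 f2 _ IH1 _ IH2|f1 f2 _ IH e].
- exact/rowspan_rowgen/rowgenC.
- rewrite ltnS leq_eqVlt => /orP[/eqP/val_inj ->|lt_ar].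
    by apply: rowspan_ext (rowspanT U_(c)%MM (rowgenC r 1)) _ => X;
      rewrite mon_mnm1 mxE mulr1.
  exact/rowspan_rowgen/rowgenX.
- exact/rowspan_rowgen/rowgenP.
- exact: rowspanD.
- exact: rowspanM.
- exact: rowspan_ext IH e.
Qed.

(* For [h] in [rowgen r], the sum of [x_r^b h] over the transpositions
   [(r m)], [m >= r], is [h] times [p_b - \sum_(m < r) x_m^b]. *)
Lemma rowspan_average (r : 'I_n) f : rowspan r f ->
  rowgen r (fun X => \sum_(m : 'I_n | (r <= m)%N) f (perm_rows (tperm r m) X)).
Proof.
elim=> [|b h rh|f1 f2 _ IH1 _ IH2|f1 f2 _ IH e].
- by apply: rowgen_ext (rowgenC r 0) _ => X; rewrite big1.
- have low : rowgen r (fun X => \sum_(m : 'I_n | ~~ (r <= m)%N) mon b (row m X)).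
    by apply: rowgen_sum => m; rewrite -ltnNge; apply: rowgen_mon.
  apply: rowgen_ext (rowgenM rh (rowgenD (rowgenP r b) (rowgenM (rowgenC r (-1)) low))) _.
  move=> X; rewrite (bigID (fun m : 'I_n => (r <= m)%N)) /= mulN1r addrK mulr_sumr.
  apply: eq_bigr => m le_rm; rewrite row_perm_rows tpermV tpermL mulrC.
  by rewrite (rowgen_invariant rh) // => a; apply: tperm_id_below.
- by apply: rowgen_ext (rowgenD IH1 IH2) _ => X; rewrite big_split.
- by apply: rowgen_ext IH _ => X; apply: eq_bigr => m _; rewrite e.
Qed.

Lemma rowgen_descent (r : 'I_n) f :
  invariant_from r f -> rowgen r.+1 f -> rowgen r f.
Proof.
move=> finv /rowgenS_rowspan/rowspan_average avg.
set N : R := \sum_(m : 'I_n | (r <= m)%N) 1.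
have N_neq0 : N != 0.
  rewrite /N sumr_const pnatr_eq0 -lt0n.
  by apply/card_gt0P; exists r; rewrite unfold_in /= subnn.
apply: rowgen_ext (rowgenM avg (rowgenC r N^-1)) _ => X /=.
rewrite (eq_bigr (fun=> f X * 1)) => [|m le_rm]; last first.
  by rewrite mulr1; apply: finv => a; apply: tperm_id_below.
by rewrite -mulr_sumr -mulrA mulfV ?mulr1.
Qed.

Lemma rowgen_invariant_descent (r : nat) f : (r <= n)%N ->
  invariant_from r f -> rowgen n f -> rowgen r f.
Proof.
move=> le_rn finv fgen; rewrite -(subKn le_rn).
suff: forall d, (d <= n - r)%N -> rowgen (n - d) f by apply.
elim=> [|d IH] le_d; first by rewrite subn0.
have lt_rn : (n - d.+1 < n)%N by lia.
have := @rowgen_descent (Ordinal lt_rn) f; rewrite /= subnSK; last by lia.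
apply; last exact: IH (ltnW le_d).
by apply: invariant_from_widen finv; lia.
Qed.

End RowElimination.

Section FirstRow.
Variables (R : realType) (n' k : nat).
Local Notation n := n'.+1.
Local Notation M := 'M[R]_(n, k).
Local Notation o := (@ord0 n').
Implicit Types (f h : M -> R) (X : M).

Inductive row0_span (d : nat) : (M -> R) -> Prop :=
| row0_span0 : row0_span d (fun _ => 0)
| row0_spanT (a : 'X_{1..k}) (q : {mpoly R[t n k]}) : (mdeg a < d)%N ->
    row0_span d (fun X => mon a (row o X) * q.@[powersums X])
| row0_spanD f h : row0_span d f -> row0_span d h -> row0_span d (fun X => f X + h X)
| row0_span_ext f h : row0_span d f -> f =1 h -> row0_span d h.

Lemma row0_span_mul_ps d f h :
  row0_span d f -> ps_poly h -> row0_span d (fun X => f X * h X).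
Proof.
move=> + [q hq]; elim=> [|a p lt_ad|f1 f2 _ IH1 _ IH2|f1 f2 _ IH e].
- by apply: row0_span_ext (row0_span0 d) _ => X; rewrite mul0r.
- by apply: row0_span_ext (row0_spanT (p * q) lt_ad) _ => X; rewrite hq mevalM mulrA.
- by apply: row0_span_ext (row0_spanD IH1 IH2) _ => X; rewrite mulrDl.
- by apply: row0_span_ext IH _ => X; rewrite e.
Qed.

Lemma row0_spanN d f : row0_span d f -> row0_span d (fun X => - f X).
Proof.
move=> df; apply: row0_span_ext (row0_span_mul_ps df (ps_polyC (-1))) _ => X.
by rewrite mulrN1.
Qed.

Lemma row0_span_widen d d' f : (d <= d')%N -> row0_span d f -> row0_span d' f.
Proof.
move=> le_dd'; elim=> [|a q lt_ad|f1 f2 _ IH1 _ IH2|f1 f2 _ IH e].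
- exact: row0_span0.
- exact/row0_spanT/(leq_trans lt_ad).
- exact: row0_spanD.
- exact: row0_span_ext IH e.
Qed.

Lemma row0_span_mulX d f c : row0_span d f -> row0_span d.+1 (fun X => X o c * f X).
Proof.
elim=> [|a q lt_ad|f1 f2 _ IH1 _ IH2|f1 f2 _ IH e].
- by apply: row0_span_ext (row0_span0 _) _ => X; rewrite mulr0.
- have lt_acd : (mdeg (a + U_(c))%MM < d.+1)%N by rewrite mdegD mdeg1 addn1.
  apply: row0_span_ext (row0_spanT q lt_acd) _ => X.
  by rewrite monD mon_mnm1 mxE mulrA [_ * X o c]mulrC.
- by apply: row0_span_ext (row0_spanD IH1 IH2) _ => X; rewrite mulrDr.
- by apply: row0_span_ext IH _ => X; rewrite e.
Qed.

Lemma row0_span_prod_ps (cs : seq 'I_k) h : ps_poly h ->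
  row0_span (size cs).+1 (fun X => (\prod_(c <- cs) X o c) * h X).
Proof.
move=> [q hq]; elim: cs => [|c cs IH] /=.
  have deg0 : (mdeg (0%MM : 'X_{1..k}) < 1)%N by rewrite mdeg0.
  by apply: row0_span_ext (row0_spanT q deg0) _ => X; rewrite mon0 big_nil hq.
by apply: row0_span_ext (row0_span_mulX c IH) _ => X; rewrite big_cons mulrA.
Qed.

Lemma row0_span_form f : row0_span n.+1 f ->
  exists qs : midx n k -> {mpoly R[t n k]},
    forall X, f X = \sum_(a : midx n k) mon a (row o X) * (qs a).@[powersums X].
Proof.
elim=> [|a q lt_an|f1 f2 _ [q1 f1E] _ [q2 f2E]|f1 f2 _ [q fE] e].
- by exists (fun _ => 0) => X; rewrite big1 // => a _; rewrite meval0 mulr0.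
- exists (fun b => if b == BMultinom lt_an then q else 0) => X.
  rewrite (bigD1 (BMultinom lt_an)) //= eqxx big1 ?addr0 // => b /negbTE->.
  by rewrite meval0 mulr0.
- exists (fun a => q1 a + q2 a) => X.
  by rewrite f1E f2E -big_split; apply: eq_bigr => a _; rewrite mevalD mulrDr.
- by exists q => X; rewrite -e fE.
Qed.

(* Equal to [X 0 c - X m c], written in the shape required by [injsum_lin]. *)
Definition row0_diff X (c : 'I_k) (m : 'I_n) : R :=
  X o c * rowmon X 0%MM m - rowmon X U_(c)%MM m.

Lemma injsum_row0_diff (cs : seq 'I_k) (pre : seq 'X_{1..k}) :
  (degsum pre + size cs <= n)%N ->
  row0_span (size cs) (fun X =>
    injsum set0 (map (rowmon X) pre ++ map (row0_diff X) cs)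
    - (\prod_(c <- cs) X o c) * injmon X set0 (pre ++ nseq (size cs) 0%MM)).
Proof.
elim: cs pre => [|c cs IH] pre deg_pre.
  by apply: row0_span_ext (row0_span0 _) _ => X; rewrite /= !cats0 big_nil mul1r subrr.
have splitE X : injsum set0 (map (rowmon X) pre ++ map (row0_diff X) (c :: cs)) =
   X o c * injsum set0 (map (rowmon X) (rcons pre 0%MM) ++ map (row0_diff X) cs)
   - injsum set0 (map (rowmon X) (rcons pre U_(c)%MM) ++ map (row0_diff X) cs).
  by rewrite !map_rcons -!cats1 -!catA /=; apply: injsum_lin.
have degsum_rcons b : degsum (rcons pre b) = (degsum pre + mdeg b)%N.
  by rewrite -cats1 degsum_cat degsum_cons /degsum big_nil addn0.
have deg0 : (degsum (rcons pre 0%MM) + size cs <= n)%N.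
  by rewrite degsum_rcons mdeg0 addn0 (leq_trans _ deg_pre) // leq_add2l.
have deg1 : (degsum (rcons pre U_(c)%MM) + size cs <= n)%N.
  by rewrite degsum_rcons mdeg1 -addnA add1n.
have top : ps_poly (fun X => (-1) * injmon X set0 (rcons pre U_(c)%MM ++ nseq (size cs) 0%MM)).
  apply: (ps_polyM (ps_polyC _)); apply: injmon_ps_poly.
  rewrite degsum_cat (_ : degsum (nseq _ _) = 0%N) ?addn0; last first.
    by rewrite /degsum big_nseq; elim: (size cs) => //= j ->; rewrite mdeg0.
  exact: leq_trans (leq_addr _ _) deg1.
apply: row0_span_ext (row0_spanD (row0_spanD (row0_span_mulX c (IH _ deg0))
  (row0_span_widen (leqnSn _) (row0_spanN (IH _ deg1)))) (row0_span_prod_ps cs top)) _.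
by move=> X; rewrite splitE big_cons cat_rcons /=; ring.
Qed.

(* Over [n] distinct rows [m_i], the product of the [X 0 c_i - X m_i c_i]
   vanishes since some [m_i] is [0]; expanding it isolates
   [n! * \prod_i X 0 c_i] modulo terms of lower degree in the first row. *)
Lemma row0_span_top (cs : seq 'I_k) : size cs = n ->
  row0_span n (fun X => \prod_(c <- cs) X o c).
Proof.
move=> sz_cs; have := @injsum_row0_diff cs [::].
rewrite /degsum big_nil add0n sz_cs => /(_ (leqnn _)) expand.
have fact_neq0 : (n ^_ n)%:R != 0 :> R by rewrite pnatr_eq0 -lt0n ffact_gt0.
apply: row0_span_ext (row0_span_mul_ps expand (ps_polyC (- (n ^_ n)%:R^-1)))  _ => X /=.
rewrite (@injsum_eq0 _ _ _ _ o) ?cards0 ?size_map ?sz_cs ?addn0 ?card_ord ?inE //; last first.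
  by rewrite all_map; apply/allP => c _ /=; rewrite /row0_diff /rowmon mon0 mon_mnm1 mxE mulr1 subrr.
rewrite /injmon -[0%MM :: _]/(nseq n 0%MM) map_nseq injsum_nseq1 => [|m]; last exact: mon0.
by rewrite cards0 subn0 card_ord; field.
Qed.

Lemma row0_span_mulXc c f :
  row0_span n.+1 f -> row0_span n.+1 (fun X => X o c * f X).
Proof.
have term_low a q : (mdeg a <= n)%N ->
    row0_span n (fun X => mon a (row o X) * q.@[powersums X]).
  rewrite leq_eqVlt => /orP[/eqP deg_a|]; last exact: row0_spanT.
  have [cs [sz_cs monE]] := mon_prod_seq R a; rewrite deg_a in sz_cs.
  apply: row0_span_ext (row0_span_mul_ps (row0_span_top sz_cs) (ps_poly_meval q)) _.
  by move=> X; rewrite monE; congr (_ * _); apply: eq_bigr => c' _; rewrite mxE.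
elim=> [|a q lt_an|f1 f2 _ IH1 _ IH2|f1 f2 _ IH e].
- by apply: row0_span_ext (row0_span0 _) _ => X; rewrite mulr0.
- exact/row0_span_mulX/term_low.
- by apply: row0_span_ext (row0_spanD IH1 IH2) _ => X; rewrite mulrDr.
- by apply: row0_span_ext IH _ => X; rewrite e.
Qed.

Lemma row0_span_mulmon (a : 'X_{1..k}) f :
  row0_span n.+1 f -> row0_span n.+1 (fun X => mon a (row o X) * f X).
Proof.
move=> af; have [cs [_ monE]] := mon_prod_seq R a.
suff : row0_span n.+1 (fun X => (\prod_(c <- cs) X o c) * f X).
  move/row0_span_ext; apply=> X; rewrite monE; congr (_ * _).
  by apply: eq_bigr => c _; rewrite mxE.
elim: cs {monE} => [|c cs IH].
  by apply: row0_span_ext af _ => X; rewrite big_nil mul1r.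
by apply: row0_span_ext (row0_span_mulXc c IH) _ => X; rewrite big_cons mulrA.
Qed.

Lemma row0_spanM f h :
  row0_span n.+1 f -> row0_span n.+1 h -> row0_span n.+1 (fun X => f X * h X).
Proof.
move=> + hh; elim=> [|a q lt_an|f1 f2 _ IH1 _ IH2|f1 f2 _ IH e].
- by apply: row0_span_ext (row0_span0 _) _ => X; rewrite mul0r.
- apply: row0_span_ext (row0_span_mulmon a (row0_span_mul_ps hh (ps_poly_meval q))) _.
  by move=> X; rewrite /= [h X * _]mulrC mulrA.
- by apply: row0_span_ext (row0_spanD IH1 IH2) _ => X; rewrite mulrDl.
- by apply: row0_span_ext IH _ => X; rewrite e.
Qed.

Lemma row0_span1 : row0_span n.+1 (fun _ => 1).
Proof.
have deg0 : (mdeg (0%MM : 'X_{1..k}) < n.+1)%N by rewrite mdeg0.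
by apply: row0_span_ext (row0_spanT 1 deg0) _ => X; rewrite mon0 meval1 mulr1.
Qed.

(* Reduce [x_0^g] in the first row, carry the identity to every row by a
   transposition, and sum. *)
Lemma ps_poly_powersum_any (g : 'X_{1..k}) :
  ps_poly (fun X => \sum_(i < n) mon g (row i X)).
Proof.
have [qs monE] := row0_span_form (row0_span_mulmon g row0_span1).
have rowE X (i : 'I_n) : mon g (row i X) =
    \sum_(a : midx n k) mon a (row i X) * (qs a).@[powersums X].
  have := monE (perm_rows (tperm o i) X).
  rewrite row_perm_rows tpermV tpermL mulr1 => ->.
  by apply: eq_bigr => a _; rewrite meval_powersums_perm_rows.
have sumE X : \sum_(a : midx n k) powersum a X * (qs a).@[powersums X]
   = \sum_(i < n) mon g (row i X).
  under [RHS]eq_bigr => i _ do rewrite rowE.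
  by rewrite exchange_big /=; apply: eq_bigr => a _; rewrite /powersum mulr_suml.
apply: ps_poly_eq sumE; apply: ps_poly_sum => a _.
exact: ps_polyM (ps_poly_powersum a) (ps_poly_meval _).
Qed.

Lemma rowgen1_row0_span f : rowgen 1 f -> row0_span n.+1 f.
Proof.
have deg0 : (mdeg (0%MM : 'X_{1..k}) < n.+1)%N by rewrite mdeg0.
elim=> [c|a c|g|f1 f2 _ IH1 _ IH2|f1 f2 _ IH1 _ IH2|f1 f2 _ IH e].
- by apply: row0_span_ext (row0_spanT c%:MP deg0) _ => X; rewrite mon0 mevalC mul1r.
- rewrite ltnS leqn0 => /eqP a0; have -> : a = o by exact: val_inj.
  by apply: row0_span_ext (row0_span_mulXc c row0_span1) _ => X; rewrite mulr1.
- have [q qE] := ps_poly_powersum_any g.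
  by apply: row0_span_ext (row0_spanT q deg0) _ => X; rewrite mon0 mul1r qE.
- exact: row0_spanD.
- exact: row0_spanM.
- exact: row0_span_ext IH e.
Qed.

Lemma row0_form_of_invariant (p : {mpoly R[n * k]}) :
  invariant_from 1 (fun X => p.@[fun m => mxvec X 0 m]) ->
  exists qs : midx n k -> {mpoly R[t n k]}, forall X,
    p.@[fun m => mxvec X 0 m] =
    \sum_(a : midx n k) mon a (row o X) * (qs a).@[powersums X].
Proof.
move=> pinv; apply/row0_span_form/rowgen1_row0_span.
exact: rowgen_invariant_descent pinv (rowgen_polymap p).
Qed.

End FirstRow.

Section PowerSumForm.
Variables (R : realType) (n k l : nat).
Implicit Types (X : 'M[R]_(n, k)) (P : 'M[R]_(n, k) -> 'M[R]_(n, l)).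

Lemma perm_equivariant_entry P : perm_equivariant P ->
  forall s X i j, P (perm_rows s X) (s i) j = P X i j.
Proof. by move=> Peq s X i j; rewrite Peq mxE permK. Qed.

Lemma powersum_form_entry (q : midx n k -> 'I_l -> {mpoly R[t n k]}) X i j :
  (\sum_(a : midx n k) bvec a X *m (qvec q a X)^T) i j =
  \sum_(a : midx n k) mon a (row i X) * (q a j).@[powersums X].
Proof. by rewrite summxE; apply: eq_bigr => a _; rewrite !mxE big_ord1 !mxE. Qed.

End PowerSumForm.

Theorem theorem2 (R : realType) (n k l : nat)
    (hn : (1 <= n)%N) (hk : (1 <= k)%N) (hl : (1 <= l)%N)
    (P : 'M[R]_(n, k) -> 'M[R]_(n, l)) :
  (is_polymap P -> perm_equivariant P -> has_powersum_form P) /\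
  (has_powersum_form P -> perm_equivariant P).
Proof.
case: n hn P => [//|n'] _ P; split.
- move=> [p pE] Peq.
  have row0_inv j : invariant_from 1 (fun X => (p ord0 j).@[fun m => mxvec X 0 m]).
    move=> s X /(_ ord0 isT) s0; rewrite -!pE -{1}s0.
    exact: perm_equivariant_entry.
  have [Q QE] := fin_all_exists (fun j => row0_form_of_invariant (row0_inv j)).
  exists (fun a j => Q j a) => X; apply/matrixP => i j.
  rewrite powersum_form_entry -(perm_equivariant_entry Peq (tperm ord0 i)) tpermR.
  rewrite pE QE; apply: eq_bigr => a _.
  by rewrite row_perm_rows tpermV tpermL meval_powersums_perm_rows.
- move=> [q qE] s X; apply/matrixP => i j.
  rewrite qE [RHS]mxE qE !powersum_form_entry; apply: eq_bigr => a _.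
  by rewrite row_perm_rows meval_powersums_perm_rows.
Qed.
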